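(* Let $G=(S,T,E,\varphi)$ be a weighted bipartite 2-graph with $|S|=m$, $|T|=n$, let $\mathcal{A}\in NBQ(m,n)$ be its adjacency tensor, and let $\mathcal{Q}=\mathcal{D}^0+\mathcal{D}^x+\mathcal{D}^y+\mathcal{A}$ and $\mathcal{L}=\mathcal{D}^0-\mathcal{D}^x-\mathcal{D}^y+\mathcal{A}$ be its signless Laplacian and Laplacian biquadratic tensors. Then both $\mathcal{Q}$ and $\mathcal{L}$ are positive semi-definite and SOS.
   Context: A biquadratic tensor is $\mathcal{A}=(a_{i_1j_1i_2j_2})\in\mathbb{R}^{m\times n\times m\times n}$ (indices $i_1,i_2\in[m]=\{1,\dots,m\}$, $j_1,j_2\in[n]$); $NBQ(m,n)$ denotes the set of entrywise nonnegative ones. Its associated form is $f(\mathbf{x},\mathbf{y})=\sum_{i_1,i_2=1}^m\sum_{j_1,j_2=1}^n a_{i_1j_1i_2j_2}x_{i_1}y_{j_1}x_{i_2}y_{j_2}$ for $\mathbf{x}\in\mathbb{R}^m,\mathbf{y}\in\mathbb{R}^n$. The tensor is positive semi-definite if $f(\mathbf{x},\mathbf{y})\ge 0$ for all $\mathbf{x},\mathbf{y}$, and SOS if $f$ is a sum of squares of polynomials in $(\mathbf{x},\mathbf{y})$. A bipartite 2-graph $G=(S,T,E)$ has vertex sets $S=\{u_1,\dots,u_m\}$, $T=\{v_1,\dots,v_n\}$ and an edge set $E$ whose elements are pairs $(\{u_{i_1},u_{i_2}\},\{v_{j_1},v_{j_2}\})$ of a 2-element subset of $S$ (so $i_1\ne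 i_2$) and a 2-element subset of $T$ (so $j_1\neq j_2$), with no edge repeated. A weighted bipartite 2-graph additionally has a weight function $\varphi:E\to[0,\infty)$. Its adjacency tensor $\mathcal{A}=(a_{i_1j_1i_2j_2})\in NBQ(m,n)$ is defined by $a_{i_1j_1i_2j_2}=\varphi(e)$ if $i_1\ne i_2$, $j_1\ne j_2$ and $e=(\{u_{i_1},u_{i_2}\},\{v_{j_1},v_{j_2}\})\in E$, and $a_{i_1j_1i_2j_2}=0$ otherwise. (For an unweighted graph, $\varphi\equiv 1$.) The tensors $\mathcal{D}^0,\mathcal{D}^x,\mathcal{D}^y\in NBQ(m,n)$ are defined by: $d^0_{i_1j_1i_2j_2}=\sum_{i_2'=1}^m\sum_{j_2'=1}^n a_{i_1j_1i_2'j_2'}$ if $i_1=i_2$ and $j_1=j_2$, and $0$ otherwise; $d^x_{i_1j_1i_2j_2}=\sum_{i_2'=1}^m a_{i_1j_1i_2'j_2}$ if $i_1=i_2$, and $0$ otherwise; $d^y_{i_1j_1i_2j_2}=\sum_{j_2'=1}^n a_{i_1j_1i_2j_2'}$ if $j_1=j_2$, and $0$ otherwise. *)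

From HB Require Import structures.
From mathcomp Require Import all_boot all_order all_algebra.
From mathcomp Require Import mpoly.
Set Implicit Arguments. Unset Strict Implicit. Unset Printing Implicit Defensive.
Import Order.TTheory GRing.Theory Num.Theory.
Local Open Scope ring_scope.

Definition bqtensor (R : Type) (m n : nat) := 'I_m -> 'I_n -> 'I_m -> 'I_n -> R.

Section BQ.
Variables (R : rcfType) (m n : nat).

(* An edge is a pair (U, V) with U a 2-subset of S = 'I_m and V a 2-subset
   of T = 'I_n; the edge set is a finite set (hence no repetitions). *)
Definition bip2_edge := ({set 'I_m} * {set 'I_n})%type.

Definition is_bip2graph (E : {set bip2_edge}) : Prop :=
  forall e, e \in E -> #|e.1| = 2%N /\ #|e.2| = 2%N.

Definition is_weight (E : {set bip2_edge}) (phi : bip2_edge -> R) : Prop :=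
  forall e, e \in E -> 0 <= phi e.

Definition adj_tensor (E : {set bip2_edge}) (phi : bip2_edge -> R)
  : bqtensor R m n :=
  fun i1 j1 i2 j2 =>
    if [&& i1 != i2, j1 != j2 & ([set i1; i2], [set j1; j2]) \in E]
    then phi ([set i1; i2], [set j1; j2]) else 0.

Definition D0 (A : bqtensor R m n) : bqtensor R m n :=
  fun i1 j1 i2 j2 =>
    if (i1 == i2) && (j1 == j2)
    then \sum_(i2' < m) \sum_(j2' < n) A i1 j1 i2' j2' else 0.

Definition Dx (A : bqtensor R m n) : bqtensor R m n :=
  fun i1 j1 i2 j2 =>
    if i1 == i2 then \sum_(i2' < m) A i1 j1 i2' j2 else 0.

Definition Dy (A : bqtensor R m n) : bqtensor R m n :=
  fun i1 j1 i2 j2 =>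
    if j1 == j2 then \sum_(j2' < n) A i1 j1 i2 j2' else 0.

Definition signless_laplacian (A : bqtensor R m n) : bqtensor R m n :=
  fun i1 j1 i2 j2 => D0 A i1 j1 i2 j2 + Dx A i1 j1 i2 j2 + Dy A i1 j1 i2 j2
                     + A i1 j1 i2 j2.

Definition laplacian (A : bqtensor R m n) : bqtensor R m n :=
  fun i1 j1 i2 j2 => D0 A i1 j1 i2 j2 - Dx A i1 j1 i2 j2 - Dy A i1 j1 i2 j2
                     + A i1 j1 i2 j2.

Definition bq_form (A : bqtensor R m n) (x : 'I_m -> R) (y : 'I_n -> R) : R :=
  \sum_(i1 < m) \sum_(j1 < n) \sum_(i2 < m) \sum_(j2 < n)
     A i1 j1 i2 j2 * x i1 * y j1 * x i2 * y j2.

Definition bq_psd (A : bqtensor R m n) : Prop :=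
  forall (x : 'I_m -> R) (y : 'I_n -> R), 0 <= bq_form A x y.

Definition xvar (i : 'I_m) : {mpoly R[m + n]} := 'X_(lshift n i).
Definition yvar (j : 'I_n) : {mpoly R[m + n]} := 'X_(rshift m j).

Definition bq_poly (A : bqtensor R m n) : {mpoly R[m + n]} :=
  \sum_(i1 < m) \sum_(j1 < n) \sum_(i2 < m) \sum_(j2 < n)
     A i1 j1 i2 j2 *: (xvar i1 * yvar j1 * xvar i2 * yvar j2).

Definition bq_sos (A : bqtensor R m n) : Prop :=
  exists s : seq {mpoly R[m + n]}, bq_poly A = \sum_(p <- s) p ^+ 2.

End BQ.

From HB Require Import structures.
From mathcomp Require Import all_boot all_order all_algebra.
From mathcomp Require Import mpoly ring.
Set Implicit Arguments.
Unset Strict Implicit.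
Unset Printing Implicit Defensive.
Import Order.TTheory GRing.Theory Num.Theory.
Local Open Scope ring_scope.

(* For an edge e = ({i, k}, {j, l}), each of A, D^0, D^x, D^y restricted to the
   contribution of e is phi(e) times a tensor product of an adjacency or degree
   matrix of the single-edge graph {i, k} with one of the graph {j, l}.  Hence
   D^0 + s D^x + s D^y + s^2 A = sum_e phi(e) L_e(s) (x) L'_e(s), where
   L_e(s) = D_e + s A_e has quadratic form (x_i + s x_k)^2.  For s = 1 and
   s = -1 this writes the forms of Q and L as
   sum_e (sqrt(phi e) (x_i + s x_k) (y_j + s y_l))^2. *)

Definition sos (V : pzSemiRingType) (p : V) : Prop :=
  exists s : seq V, p = \sum_(q <- s) q ^+ 2.

Lemma sos0 (V : pzSemiRingType) : sos (0 : V).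
Proof. by exists [::]; rewrite big_nil. Qed.

Lemma sos_sqr (V : pzSemiRingType) (p : V) : sos (p ^+ 2).
Proof. by exists [:: p]; rewrite big_seq1. Qed.

Lemma sosD (V : pzSemiRingType) (p q : V) : sos p -> sos q -> sos (p + q).
Proof. by move=> [s ->] [t ->]; exists (s ++ t); rewrite big_cat. Qed.

Lemma sos_sum (V : pzSemiRingType) (I : Type) (r : seq I) (P : pred I)
    (F : I -> V) :
  (forall i, P i -> sos (F i)) -> sos (\sum_(i <- r | P i) F i).
Proof. exact: (big_ind (@sos V) (sos0 V) (@sosD V)). Qed.

Section EdgeLaplacian.
Variables (R : comNzRingType) (T : finType).

Definition pair_adj (U : {set T}) (a b : T) : R :=
  ((a != b) && ([set a; b] == U))%:R.

Definition degree_mx (c : T -> T -> R) (a b : T) : R :=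
  if a == b then \sum_(b' : T) c a b' else 0.

(* s = 1: signless Laplacian, s = -1: Laplacian, of the graph with one edge U. *)
Definition signed_edge_laplacian (s : R) (U : {set T}) (a b : T) : R :=
  degree_mx (pair_adj U) a b + s * pair_adj U a b.

Variable V : algType R.

Definition qform (var : T -> V) (c : T -> T -> R) : V :=
  \sum_(a : T) \sum_(b : T) c a b *: (var a * var b).

Lemma set2_eq_set2 (i k a b : T) : i != k ->
  (a != b) && ([set a; b] == [set i; k]) = ((a, b) == (i, k)) || ((a, b) == (k, i)).
Proof.
move=> neq_ik; rewrite !xpair_eqE; apply/idP/idP.
  move=> /andP[neq_ab /eqP eq_ab].
  have : a \in [set i; k] by rewrite -eq_ab set21.
  have : b \in [set i; k] by rewrite -eq_ab set22.
  rewrite !in_set2 => /orP[]/eqP eq_b /orP[]/eqP eq_a; subst a b;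
    by rewrite ?eqxx ?orbT // in neq_ab *.
case/orP=> /andP[/eqP-> /eqP->]; first by rewrite neq_ik eqxx.
by rewrite eq_sym neq_ik setUC eqxx.
Qed.

Lemma pair_adj_set2 (i k a b : T) : i != k ->
  pair_adj [set i; k] a b = ((a, b) == (i, k))%:R + ((a, b) == (k, i))%:R.
Proof.
move=> neq_ik; rewrite /pair_adj set2_eq_set2 // !xpair_eqE.
case: (eqVneq a i) => [->|_] /=; last by rewrite add0r.
by rewrite (negbTE neq_ik) /= orbF addr0.
Qed.

Lemma sum_pair_delta (W : lmodType R) (p : T * T) (F : T -> T -> W) :
  \sum_(a : T) \sum_(b : T) ((a, b) == p)%:R *: F a b = F p.1 p.2.
Proof.
rewrite pair_big /= (eq_bigr (fun q => if q == p then F q.1 q.2 else 0)).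
  by rewrite -big_mkcond big_pred1_eq.
by move=> [a b] _; case: eqP; rewrite ?scale1r ?scale0r.
Qed.

Lemma sum_pair_adj_set2 (W : lmodType R) (i k : T) (F : T -> T -> W) : i != k ->
  \sum_(a : T) \sum_(b : T) pair_adj [set i; k] a b *: F a b = F i k + F k i.
Proof.
move=> neq_ik; under eq_bigr => a _ do
  under eq_bigr => b _ do rewrite pair_adj_set2 // scalerDl.
by rewrite (eq_bigr _ (fun a _ => big_split _ _ _ _ _)) big_split /= !sum_pair_delta.
Qed.

Lemma qform_degree_mx (var : T -> V) (c : T -> T -> R) :
  qform var (degree_mx c) = \sum_(a : T) \sum_(b : T) c a b *: (var a * var a).
Proof.
apply: eq_bigr => a _; rewrite (bigD1 a) //= big1 => [|b neq_ba].
  by rewrite /degree_mx eqxx addr0 scaler_suml.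
by rewrite /degree_mx eq_sym (negbTE neq_ba) scale0r.
Qed.

Lemma qformD (var : T -> V) (c d : T -> T -> R) (s : R) :
  qform var (fun a b => c a b + s * d a b) = qform var c + s *: qform var d.
Proof.
rewrite /qform scaler_sumr -big_split; apply: eq_bigr => a _.
rewrite scaler_sumr -big_split; apply: eq_bigr => b _.
by rewrite scalerDl scalerA.
Qed.

Lemma qform_signed_edge_laplacian (var : T -> V) (s : R) (i k : T) :
  i != k -> s ^+ 2 = 1 ->
  qform var (signed_edge_laplacian s [set i; k]) = (var i + s *: var k) ^+ 2.
Proof.
move=> neq_ik s2; rewrite qformD qform_degree_mx /qform !sum_pair_adj_set2 //.
rewrite expr2 mulrDl !mulrDr -!scalerAl -!scalerAr scalerA -[s * s]expr2 s2 scale1r.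
by rewrite scalerDr addrACA [var k * var k + _]addrC.
Qed.
End EdgeLaplacian.

Arguments pair_adj {R T} U a b.

Section ProductDecomposition.
Variables (R : rcfType) (m n : nat) (X : finType) (E : {set X}) (w : X -> R).
Variables (a : X -> 'I_m -> 'I_m -> R) (b : X -> 'I_n -> 'I_n -> R).
Variable A : bqtensor R m n.
Hypothesis A_sum : forall i1 j1 i2 j2,
  A i1 j1 i2 j2 = \sum_(e in E) w e * (a e i1 i2 * b e j1 j2).

Lemma D0_sum i1 j1 i2 j2 : D0 A i1 j1 i2 j2 =
  \sum_(e in E) w e * (degree_mx (a e) i1 i2 * degree_mx (b e) j1 j2).
Proof.
rewrite /D0 /degree_mx; case: (i1 == i2); case: (j1 == j2) => /=;
  try by rewrite big1 // => e _; rewrite ?(mulr0, mul0r).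
under eq_bigr => i _ do under eq_bigr => j _ do rewrite A_sum.
rewrite (eq_bigr _ (fun i _ => exchange_big _ _ _ _ _ _)) exchange_big.
apply: eq_bigr => e _; rewrite mulr_suml mulr_sumr; apply: eq_bigr => i _.
by rewrite !mulr_sumr; apply: eq_bigr => j _; rewrite !mulrA.
Qed.

Lemma Dx_sum i1 j1 i2 j2 : Dx A i1 j1 i2 j2 =
  \sum_(e in E) w e * (degree_mx (a e) i1 i2 * b e j1 j2).
Proof.
rewrite /Dx /degree_mx; case: (i1 == i2) => /=;
  last by rewrite big1 // => e _; rewrite mul0r mulr0.
under eq_bigr => i _ do rewrite A_sum.
rewrite exchange_big; apply: eq_bigr => e _.
by rewrite mulr_suml mulr_sumr; apply: eq_bigr => i _; rewrite !mulrA.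
Qed.

Lemma Dy_sum i1 j1 i2 j2 : Dy A i1 j1 i2 j2 =
  \sum_(e in E) w e * (a e i1 i2 * degree_mx (b e) j1 j2).
Proof.
rewrite /Dy /degree_mx; case: (j1 == j2) => /=;
  last by rewrite big1 // => e _; rewrite !mulr0.
under eq_bigr => j _ do rewrite A_sum.
rewrite exchange_big; apply: eq_bigr => e _.
by rewrite !mulr_sumr; apply: eq_bigr => j _; rewrite !mulrA.
Qed.

Lemma signed_laplacian_sum (s : R) i1 j1 i2 j2 :
  D0 A i1 j1 i2 j2 + s * Dx A i1 j1 i2 j2 + s * Dy A i1 j1 i2 j2
    + s ^+ 2 * A i1 j1 i2 j2 =
  \sum_(e in E) w e * ((degree_mx (a e) i1 i2 + s * a e i1 i2)
                       * (degree_mx (b e) j1 j2 + s * b e j1 j2)).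
Proof.
rewrite D0_sum Dx_sum Dy_sum A_sum !mulr_sumr -!big_split /=.
by apply: eq_bigr => e _; ring.
Qed.

Lemma bq_poly_sum : bq_poly A =
  \sum_(e in E) w e *: (qform (@xvar R m n) (a e) * qform (@yvar R m n) (b e)).
Proof.
have expand e : w e *: (qform (@xvar R m n) (a e) * qform (@yvar R m n) (b e)) =
    \sum_(i1 < m) \sum_(j1 < n) \sum_(i2 < m) \sum_(j2 < n)
      (w e * (a e i1 i2 * b e j1 j2))
        *: (@xvar R m n i1 * @yvar R m n j1 * @xvar R m n i2 * @yvar R m n j2).
  rewrite /qform mulr_suml scaler_sumr; apply: eq_bigr => i1 _.
  rewrite mulr_suml scaler_sumr.
  under eq_bigr => i2 _ do rewrite mulr_sumr scaler_sumr.
  rewrite exchange_big; apply: eq_bigr => j1 _; apply: eq_bigr => i2 _.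
  rewrite mulr_sumr scaler_sumr; apply: eq_bigr => j2 _.
  by rewrite -scalerAl -scalerAr !scalerA; congr (_ *: _); ring.
under [RHS]eq_bigr => e _ do rewrite expand.
rewrite /bq_poly [RHS]exchange_big; apply: eq_bigr => i1 _.
rewrite [RHS]exchange_big; apply: eq_bigr => j1 _.
rewrite [RHS]exchange_big; apply: eq_bigr => i2 _.
by rewrite [RHS]exchange_big; apply: eq_bigr => j2 _; rewrite -scaler_suml A_sum.
Qed.
End ProductDecomposition.

Lemma adj_tensor_sum (R : rcfType) (m n : nat) (E : {set bip2_edge m n})
    (phi : bip2_edge m n -> R) i1 j1 i2 j2 :
  adj_tensor E phi i1 j1 i2 j2 =
  \sum_(e in E) phi e * (pair_adj e.1 i1 i2 * pair_adj e.2 j1 j2).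
Proof.
rewrite /adj_tensor; set e0 := ([set i1; i2], [set j1; j2]).
have pair_adjM (e : bip2_edge m n) : pair_adj e.1 i1 i2 * pair_adj e.2 j1 j2
    = ((i1 != i2) && (j1 != j2) && (e == e0))%:R :> R.
  case: e => U W; rewrite -natrM mulnb xpair_eqE (eq_sym U) (eq_sym W).
  by rewrite andbACA.
under eq_bigr => e _ do rewrite pair_adjM.
case: (i1 != i2); case: (j1 != j2) => /=;
  try by rewrite big1 // => e _; rewrite mulr0.
rewrite big_mkcond (bigD1 e0) //= big1 => [|e /negbTE ne]; last first.
  by rewrite ne mulr0 if_same.
by rewrite eqxx mulr1 addr0.
Qed.

Lemma edge_term_sos (R : rcfType) (m n : nat) (w s : R)
    (U : {set 'I_m}) (W : {set 'I_n}) :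
  0 <= w -> #|U| = 2%N -> #|W| = 2%N -> s ^+ 2 = 1 ->
  sos (w *: (qform (@xvar R m n) (signed_edge_laplacian s U)
             * qform (@yvar R m n) (signed_edge_laplacian s W))).
Proof.
move=> w_ge0 /eqP/cards2P[i [k [neq_ik ->]]] /eqP/cards2P[j [l [neq_jl ->]]] s2.
rewrite !qform_signed_edge_laplacian // -exprMn -[w](sqr_sqrtr w_ge0) -exprZn.
exact: sos_sqr.
Qed.

Lemma adj_signed_laplacian_sos (R : rcfType) (m n : nat)
    (E : {set bip2_edge m n}) (phi : bip2_edge m n -> R) (s : R)
    (L : bqtensor R m n) :
  is_bip2graph E -> is_weight E phi -> s ^+ 2 = 1 ->
  let A := adj_tensor E phi in
  (forall i1 j1 i2 j2, L i1 j1 i2 j2 = D0 A i1 j1 i2 j2 + s * Dx A i1 j1 i2 j2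
                                       + s * Dy A i1 j1 i2 j2 + s ^+ 2 * A i1 j1 i2 j2) ->
  bq_sos L.
Proof.
move=> graphE weightE s2 A L_def.
rewrite /bq_sos (@bq_poly_sum R m n _ E phi
  (fun e => signed_edge_laplacian s e.1) (fun e => signed_edge_laplacian s e.2) L).
  apply: sos_sum => e eE; have [card1 card2] := graphE e eE.
  exact: edge_term_sos (weightE e eE) card1 card2 s2.
by move=> i1 j1 i2 j2; rewrite L_def (signed_laplacian_sum (adj_tensor_sum E phi)).
Qed.

Lemma sos_meval_ge0 (R : realDomainType) (k : nat) (p : {mpoly R[k]})
    (v : 'I_k -> R) :
  sos p -> 0 <= p.@[v].
Proof.
move=> [s ->]; rewrite raddf_sum; apply: sumr_ge0 => q _.
by rewrite /= expr2 mevalM -expr2 sqr_ge0.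
Qed.

Lemma bq_sos_psd (R : rcfType) (m n : nat) (A : bqtensor R m n) :
  bq_sos A -> bq_psd A.
Proof.
move=> A_sos x y.
pose v (t : 'I_(m + n)) := match split t with inl i => x i | inr j => y j end.
have xvarE i : (@xvar R m n i).@[v] = x i.
  by rewrite /xvar mevalXU /v (unsplitK (inl i)).
have yvarE j : (@yvar R m n j).@[v] = y j.
  by rewrite /yvar mevalXU /v (unsplitK (inr j)).
have -> : bq_form A x y = (bq_poly A).@[v].
  rewrite /bq_poly /bq_form !raddf_sum; apply: eq_bigr => i1 _.
  rewrite !raddf_sum; apply: eq_bigr => j1 _.
  rewrite !raddf_sum; apply: eq_bigr => i2 _.
  rewrite !raddf_sum; apply: eq_bigr => j2 _.
  by rewrite /= mevalZ !mevalM !xvarE !yvarE !mulrA.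
exact: (@sos_meval_ge0 R _ (bq_poly A) v A_sos).
Qed.

Theorem lemma3p1 (R : rcfType) (m n : nat)
  (E : {set bip2_edge m n}) (phi : bip2_edge m n -> R) :
  is_bip2graph E -> is_weight E phi ->
  let A := adj_tensor E phi in
  [/\ bq_psd (signless_laplacian A), bq_sos (signless_laplacian A),
      bq_psd (laplacian A) & bq_sos (laplacian A)].
Proof.
move=> graphE weightE A.
have Q_sos : bq_sos (signless_laplacian A).
  apply: (@adj_signed_laplacian_sos R m n E phi 1) => //; first by rewrite expr1n.
  by move=> i1 j1 i2 j2; rewrite expr1n !mul1r.
have L_sos : bq_sos (laplacian A).
  apply: (@adj_signed_laplacian_sos R m n E phi (-1)) => //; first by rewrite sqrrN expr1n.
  by move=> i1 j1 i2 j2; rewrite sqrrN expr1n mul1r !mulN1r.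
by split => //; apply: bq_sos_psd.
Qed.
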